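(* Let $\kappa$ be a regular cardinal and $\lambda\le\kappa$. If $(T,L)$ is a good labelled $(\kappa,\lambda)$-tree, then $(T,L)$ is a $(\kappa,\lambda)$-Borel$^*$-code.
   Context: Basic $\kappa$-open sets: $N_\eta=\{\zeta\in\kappa^\kappa\mid\eta\subseteq\zeta\}$ for $\eta:X\to\kappa$, $X\subseteq\kappa$, $|X|<\kappa$, and $\emptyset$; in $\kappa^\kappa\times\kappa^\kappa$ they are products $N_\eta\times N_\xi$. A set is $\kappa$-open if it is a union of at most $\kappa$ basic $\kappa$-open sets, $\kappa$-closed if its complement is $\kappa$-open; $\kappa$-Borel sets form the smallest class containing the basic $\kappa$-open sets closed under complements and unions and intersections of at most $\kappa$ sets. A good labelled $(\kappa,\lambda)$-tree is a pair $(T,L)$ where $T$ is a (rooted) tree without branches of length $\kappa$, every element of $T$ has at most $\kappa$ immediate successors, $|T|\le\lambda$, every increasing sequence in $T$ has a supremum in $T$, $L(t)\in\{\bigcup,\bigcap\}$ for every non-leaf $t$, and $L(t)$ is a basic $\kappa$-open set for every leaf $t$. Borel$^*$-game $GB(\xi,(T,L))$ for $\xi\in\kappa^\kappa$: the play starts at the root; at a non-leaf node $t$, player II chooses an immediate successor if $L(t)=\bigcup$ and player I chooses one if $L(t)=\bigcap$; at limit stages the play moves to the supremum of the nodes chosen so far; the play ends at a leaf $t$ and II wins iff $\xi\in L(t)$. $(T,L)$ is a $(\kappa,\lambda)$-Borel$^*$-code if it is a good labelled $(\kappa,\lambda)$-tree and there is a function $\pi$ such that: (i) $\mathrm{dom}(\pi)$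 is a $\kappa$-closed subset of $\kappa^\kappa$ and each $\pi(\eta)$ is a strategy of II in the Borel$^*$-game on $(T,L)$; (ii) for every $\xi\in\kappa^\kappa$, if II has a winning strategy in $GB(\xi,(T,L))$ then $\pi(\eta)$ is a winning strategy of II in $GB(\xi,(T,L))$ for some $\eta\in\mathrm{dom}(\pi)$; (iii) the set $\{(\xi,\eta)\mid\eta\in\mathrm{dom}(\pi)$ and $\pi(\eta)$ is a winning strategy of II in $GB(\xi,(T,L))\}$ is $\kappa$-Borel. *)

Set Implicit Arguments.

Definition injective {A B : Type} (f : A -> B) : Prop :=
  forall x y, f x = f y -> x = y.

Definition card_le (A B : Type) : Prop := exists f : A -> B, injective f.

Section Kappa.
Variable K : Type.              (* the cardinal kappa, as a set of ordinals *)
Variable ltK : K -> K -> Prop.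

Definition small (X : K -> Prop) : Prop :=
  ~ card_le K {x : K | X x}.

(* (K, ltK) is (the von Neumann ordinal of) a regular cardinal: a strict
   well-order, every proper initial segment has smaller cardinality
   (initial ordinal), infinite, and every subset of size < kappa is bounded. *)
Definition regular_cardinal : Prop :=
  (forall a, ~ ltK a a) /\
  (forall a b c, ltK a b -> ltK b c -> ltK a c) /\
  (forall a b, a = b \/ ltK a b \/ ltK b a) /\
  well_founded ltK /\
  (forall a, ~ card_le K {b : K | ltK b a}) /\
  card_le nat K /\
  (forall S : K -> Prop, small S -> exists a, forall s, S s -> ltK s a).

(* kappa^kappa = K -> K.  A partial function eta : X -> kappa, X subset kappa,
   is coded by eta : K -> option K with domain {a | eta a <> None}. *)
Definition dom (eta : K -> option K) : K -> Prop := fun a => eta a <> None.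

Definition N (eta : K -> option K) : (K -> K) -> Prop :=
  fun zeta => forall a b, eta a = Some b -> zeta a = b.

Definition basic_open (A : (K -> K) -> Prop) : Prop :=
  (forall x, ~ A x) \/
  (exists eta, small (dom eta) /\ forall x, A x <-> N eta x).

Definition kopen (A : (K -> K) -> Prop) : Prop :=
  exists (I : Type) (B : I -> (K -> K) -> Prop),
    card_le I K /\ (forall i, basic_open (B i)) /\
    (forall x, A x <-> exists i, B i x).

Definition kclosed (A : (K -> K) -> Prop) : Prop :=
  kopen (fun x => ~ A x).

Definition basic_open2 (P : (K -> K) * (K -> K) -> Prop) : Prop :=
  exists A B, basic_open A /\ basic_open B /\
    forall p, P p <-> (A (fst p) /\ B (snd p)).

Inductive kBorel2 : ((K -> K) * (K -> K) -> Prop) -> Prop :=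
| kB_basic P : basic_open2 P -> kBorel2 P
| kB_compl P Q : kBorel2 P -> (forall p, Q p <-> ~ P p) -> kBorel2 Q
| kB_union (I : Type) (F : I -> (K -> K) * (K -> K) -> Prop) Q :
    card_le I K -> (forall i, kBorel2 (F i)) ->
    (forall p, Q p <-> exists i, F i p) -> kBorel2 Q
| kB_inter (I : Type) (F : I -> (K -> K) * (K -> K) -> Prop) Q :
    card_le I K -> (forall i, kBorel2 (F i)) ->
    (forall p, Q p <-> forall i, F i p) -> kBorel2 Q.

Inductive label : Type :=
| LUnion : label
| LInter : label
| LOpen : ((K -> K) -> Prop) -> label.

Section Tree.
Variable T : Type.
Variable ltT : T -> T -> Prop.
Variable L : T -> label.

Definition leT (s t : T) : Prop := s = t \/ ltT s t.

Definition is_chain (C : T -> Prop) : Prop :=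
  forall a b, C a -> C b -> a = b \/ ltT a b \/ ltT b a.

Definition is_tree : Prop :=
  (forall t, ~ ltT t t) /\
  (forall a b c, ltT a b -> ltT b c -> ltT a c) /\
  (exists r, forall t, leT r t) /\
  (forall t, is_chain (fun s => ltT s t)) /\
  (forall t (S : T -> Prop), (exists s, S s /\ ltT s t) ->
     exists m, S m /\ ltT m t /\ forall s, S s -> ltT s t -> leT m s).

Definition leaf (t : T) : Prop := forall u, ~ ltT t u.

Definition immsucc (s u : T) : Prop :=
  ltT s u /\ forall v, ~ (ltT s v /\ ltT v u).

Definition good_labelled_tree (Lam : Type) : Prop :=
  is_tree /\
  (~ exists f : K -> T, forall a b, ltK a b -> ltT (f a) (f b)) /\
  (forall t, card_le {u : T | immsucc t u} K) /\
  card_le T Lam /\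
  (forall C, is_chain C ->
     exists s, (forall c, C c -> leT c s) /\
               (forall u, (forall c, C c -> leT c u) -> leT s u)) /\
  (forall t, ~ leaf t -> L t = LUnion \/ L t = LInter) /\
  (forall t, leaf t -> exists A, L t = LOpen A /\ basic_open A).

(* A strategy of II: at each non-leaf node labelled \bigcup it picks an
   immediate successor.  (In a tree the history of a play reaching t is
   the set of predecessors of t, so this is a function of the history.) *)
Definition strategyII (sigma : T -> T) : Prop :=
  forall t, ~ leaf t -> L t = LUnion -> immsucc t (sigma t).

(* The set of positions visited by a play: a branch (maximal downward
   closed chain). *)
Definition branch (P : T -> Prop) : Prop :=
  is_chain P /\ (exists t, P t) /\
  (forall a b, P b -> ltT a b -> P a) /\
  (forall Q, is_chain Q -> (forall a b, Q b -> ltT a b -> Q a) ->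
     (forall t, P t -> Q t) -> forall t, Q t -> P t).

Definition follows (sigma : T -> T) (P : T -> Prop) : Prop :=
  forall t, P t -> ~ leaf t -> L t = LUnion -> P (sigma t).

Definition II_wins_play (xi : K -> K) (P : T -> Prop) : Prop :=
  exists t A, P t /\ leaf t /\ L t = LOpen A /\ A xi.

Definition winning_II (xi : K -> K) (sigma : T -> T) : Prop :=
  strategyII sigma /\
  forall P, branch P -> follows sigma P -> II_wins_play xi P.

Definition borel_star_code (Lam : Type) : Prop :=
  good_labelled_tree Lam /\
  exists (D : (K -> K) -> Prop) (pi : (K -> K) -> T -> T),
    kclosed D /\
    (forall eta, D eta -> strategyII (pi eta)) /\
    (forall xi, (exists sigma, winning_II xi sigma) ->
       exists eta, D eta /\ winning_II xi (pi eta)) /\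
    kBorel2 (fun p => D (snd p) /\ winning_II (fst p) (pi (snd p))).

End Tree.
End Kappa.

From Stdlib Require Import Classical ClassicalEpsilon ProofIrrelevance.
Set Implicit Arguments.

(* Since |T| <= lambda <= kappa, fix an injection [code] of T into kappa.  An
   element eta of kappa^kappa then describes a strategy of II: at a node s,
   move to the node coded by eta(code s) if that is an immediate successor of
   s, and to a fixed default successor otherwise.  Every strategy arises this
   way, so dom(pi) can be all of kappa^kappa.  A play following a strategy
   ends at a leaf t, and whether the play can reach t depends only on the
   coordinates of eta at the codes of the nodes below t.  Hence "pi(eta) is
   winning for xi" is the intersection, over the at most kappa leaves t, of
   "t is not reached, or xi is in L(t)", which is kappa-Borel. *)

Lemma card_le_trans (A B C : Type) : card_le A B -> card_le B C -> card_le A C.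
Proof.
  intros [f Hf] [g Hg]. exists (fun a => g (f a)). intros x y E. exact (Hf _ _ (Hg _ _ E)).
Qed.

Lemma card_le_sig (A : Type) (P : A -> Prop) : card_le {x | P x} A.
Proof.
  exists (@proj1_sig _ _). intros [x Hx] [y Hy] E; simpl in E; subst.
  f_equal; apply proof_irrelevance.
Qed.

Lemma card_le_bool_nat : card_le bool nat.
Proof.
  exists (fun b : bool => if b then 1 else 0). intros [|] [|] E; congruence.
Qed.

Lemma injective_left_inverse (A B : Type) (f : A -> B) :
  A -> injective f -> exists g : B -> A, forall x, g (f x) = x.
Proof.
  intros a0 Hf.
  destruct (choice (fun (b : B) (a : A) => forall x, f x = b -> x = a)) as [g Hg].
  - intros b. destruct (classic (exists x, f x = b)) as [[x <-]|Hnone].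
    + exists x. intros y E. exact (Hf _ _ E).
    + exists a0. intros x E. exfalso. exact (Hnone (ex_intro _ x E)).
  - exists g. intros x. symmetry. exact (Hg (f x) x eq_refl).
Qed.

Section KappaBorel.
Variable K : Type.
Hypothesis K_infinite : card_le nat K.

Lemma small_subsingleton (S : K -> Prop) (a : K) : (forall x, S x -> x = a) -> small S.
Proof.
  intros HS [h Hh]. destruct K_infinite as [g Hg].
  assert (E : h (g 0) = h (g 1)).
  { destruct (h (g 0)) as [x Hx], (h (g 1)) as [y Hy].
    assert (x = y) as <- by (rewrite (HS x Hx), (HS y Hy); reflexivity).
    f_equal; apply proof_irrelevance. }
  apply Hh, Hg in E. discriminate.
Qed.

Lemma basic_open_full : basic_open (fun _ : K -> K => True).
Proof.
  destruct K_infinite as [g _]. right. exists (fun _ => None). split.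
  - apply small_subsingleton with (a := g 0). intros x Hx. exfalso; apply Hx; reflexivity.
  - intros x; split; [intros _ a b Hb; discriminate | trivial].
Qed.

Lemma basic_open_coord (a k : K) : basic_open (fun z : K -> K => z a = k).
Proof.
  right. exists (fun x => if excluded_middle_informative (x = a) then Some k else None).
  split.
  - apply small_subsingleton with (a := a). intros x Hx. unfold dom in Hx.
    destruct (excluded_middle_informative (x = a)); congruence.
  - intros z; split.
    + intros Hz x b Hb. destruct (excluded_middle_informative (x = a)); congruence.
    + intros Hz. apply Hz. destruct (excluded_middle_informative (a = a)); congruence.
Qed.

Lemma kclosed_full : kclosed (fun _ : K -> K => True).
Proof.
  exists Empty_set, (fun (e : Empty_set) (_ : K -> K) => False). split; [|split].
  - exists (fun e : Empty_set => match e with end). intros [].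
  - intros [].
  - intros x; split; [intros H; exfalso; exact (H I) | intros [[] _]].
Qed.

Lemma kBorel2_ext {P Q : (K -> K) * (K -> K) -> Prop} :
  kBorel2 P -> (forall p, P p <-> Q p) -> kBorel2 Q.
Proof.
  intros HP HPQ. apply (kB_compl Q (kB_compl _ HP (fun p => iff_refl _))).
  intros p. rewrite <- HPQ. split; [intros H1 H2; exact (H2 H1) | apply NNPP].
Qed.

Lemma kBorel2_compl (P : (K -> K) * (K -> K) -> Prop) :
  kBorel2 P -> kBorel2 (fun p => ~ P p).
Proof. intros HP. exact (kB_compl _ HP (fun p => iff_refl _)). Qed.

Lemma kBorel2_forall (I : Type) (F : I -> (K -> K) * (K -> K) -> Prop) :
  card_le I K -> (forall i, kBorel2 (F i)) -> kBorel2 (fun p => forall i, F i p).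
Proof. intros HI HF. exact (kB_inter F _ HI HF (fun p => iff_refl _)). Qed.

Lemma kBorel2_or (P Q : (K -> K) * (K -> K) -> Prop) :
  kBorel2 P -> kBorel2 Q -> kBorel2 (fun p => P p \/ Q p).
Proof.
  intros HP HQ.
  apply (kB_union (fun (b : bool) => if b then P else Q)).
  - exact (card_le_trans card_le_bool_nat K_infinite).
  - intros [|]; assumption.
  - intros p; split.
    + intros [H|H]; [exists true | exists false]; exact H.
    + intros [[|] H]; [left | right]; exact H.
Qed.

Lemma kBorel2_True : kBorel2 (fun _ : (K -> K) * (K -> K) => True).
Proof.
  apply kB_basic. exists (fun _ => True), (fun _ => True).
  split; [|split]; [apply basic_open_full .. | tauto].
Qed.

Lemma kBorel2_fst (A : (K -> K) -> Prop) : basic_open A -> kBorel2 (fun p => A (fst p)).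
Proof.
  intros HA. apply kB_basic. exists A, (fun _ => True).
  split; [|split]; [exact HA | apply basic_open_full | tauto].
Qed.

Lemma kBorel2_snd_coord (a : K) (X : K -> Prop) :
  kBorel2 (fun p : (K -> K) * (K -> K) => X (snd p a)).
Proof.
  apply (kB_union (fun (k : {k | X k}) p => snd p a = proj1_sig k)).
  - apply card_le_sig.
  - intros [k Hk]. apply kB_basic. exists (fun _ => True), (fun z => z a = k).
    split; [|split]; [apply basic_open_full | apply basic_open_coord | simpl; tauto].
  - intros p; split.
    + intros H. exists (exist _ _ H). reflexivity.
    + intros [[k Hk] E]. simpl in E. rewrite E. exact Hk.
Qed.

End KappaBorel.

Section Trees.
Variables (K T : Type) (ltT : T -> T -> Prop) (L : T -> label K).
Hypothesis tree : is_tree ltT.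
Hypothesis chains_have_sup : forall C, is_chain ltT C ->
  exists s, (forall c, C c -> leT ltT c s) /\
            (forall u, (forall c, C c -> leT ltT c u) -> leT ltT s u).

Lemma lt_leT_trans a b c : ltT a b -> leT ltT b c -> ltT a c.
Proof. destruct tree as [_ [tr _]]. intros Hab [<-|Hbc]; eauto. Qed.

Lemma leT_lt_trans a b c : leT ltT a b -> ltT b c -> ltT a c.
Proof. destruct tree as [_ [tr _]]. intros [->|Hab] Hbc; eauto. Qed.

Lemma leT_below_chain t : is_chain ltT (fun x => leT ltT x t).
Proof.
  destruct tree as [_ [_ [_ [ch _]]]].
  intros a b [->|Ha] [->|Hb]; auto.
  apply (ch t a b Ha Hb).
Qed.

Lemma branch_maximal P u : branch ltT P -> (forall p, P p -> leT ltT p u) -> P u.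
Proof.
  intros [_ [_ [_ Pmax]]] Hu. apply (Pmax (fun x => leT ltT x u)).
  - apply leT_below_chain.
  - intros a b Hb Hab. right. exact (lt_leT_trans Hab Hb).
  - exact Hu.
  - left; reflexivity.
Qed.

Lemma branch_below_leaf t : leaf ltT t -> branch ltT (fun x => leT ltT x t).
Proof.
  intros Ht. split; [apply leT_below_chain|].
  split; [exists t; left; reflexivity|].
  split; [intros a b Hb Hab; right; exact (lt_leT_trans Hab Hb)|].
  intros Q Qchain _ HPQ q Hq.
  destruct (Qchain q t Hq (HPQ t (or_introl eq_refl))) as [->|[Hqt|Htq]].
  - left; reflexivity.
  - right; exact Hqt.
  - exfalso; exact (Ht q Htq).
Qed.

Lemma branch_has_leaf P : branch ltT P ->
  exists s, P s /\ leaf ltT s /\ forall p, P p -> leT ltT p s.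
Proof.
  intros HP. destruct tree as [irr _].
  destruct (chains_have_sup (proj1 HP)) as [s [Hub _]].
  exists s. split; [exact (branch_maximal HP Hub)|]. split; [|exact Hub].
  intros u Hsu.
  assert (Pu : P u).
  { apply (branch_maximal HP). intros p Hp. right. exact (leT_lt_trans (Hub p Hp) Hsu). }
  exact (irr s (lt_leT_trans Hsu (Hub u Pu))).
Qed.

Definition reached_by (sg : T -> T) (t : T) : Prop :=
  forall s, ltT s t -> ~ leaf ltT s -> L s = LUnion K -> leT ltT (sg s) t.

Definition wins_at_reached_leaves (xi : K -> K) (sg : T -> T) : Prop :=
  forall t, leaf ltT t -> reached_by sg t -> exists A, L t = LOpen A /\ A xi.

Lemma winning_plays_iff_reached_leaves xi sg :
  (forall P, branch ltT P -> follows ltT L sg P -> II_wins_play ltT L xi P) <->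
  wins_at_reached_leaves xi sg.
Proof.
  split.
  - intros Hwin t Ht Hreach.
    destruct (Hwin _ (branch_below_leaf Ht)) as [t' [A [Ht't [Ht' [HA Hxi]]]]].
    + intros s [->|Hst] Hs HU; [contradiction | exact (Hreach s Hst Hs HU)].
    + destruct Ht't as [->|Ht't]; [exists A; auto | exfalso; exact (Ht' t Ht't)].
  - intros Hwin P HP Hfollow.
    destruct (branch_has_leaf HP) as [s [Ps [Hs Hub]]].
    destruct (Hwin s Hs) as [A [HA Hxi]].
    + intros s' Hs's Hs' HU. apply Hub, Hfollow; auto.
      destruct HP as [_ [_ [Pdown _]]]. exact (Pdown s' s Ps Hs's).
    + exists s, A; auto.
Qed.

Lemma exists_immsucc s u : ltT s u -> exists v, immsucc ltT s v.
Proof.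
  destruct tree as [irr [tr [_ [_ Hmin]]]]. intros Hsu.
  destruct (classic (exists v, ltT s v /\ ltT v u)) as [[v [Hsv Hvu]]|Hnone].
  - destruct (Hmin u (fun x => ltT s x) (ex_intro _ v (conj Hsv Hvu)))
      as [m [Hsm [Hmu Hmin_m]]].
    exists m. split; [exact Hsm|]. intros w [Hsw Hwm].
    destruct (Hmin_m w Hsw (tr _ _ _ Hwm Hmu)) as [->|Hmw].
    + exact (irr _ Hwm).
    + exact (irr m (tr _ _ _ Hmw Hwm)).
  - exists u. split; [exact Hsu|]. intros v Hv. exact (Hnone (ex_intro _ v Hv)).
Qed.

Lemma exists_strategyII : exists sg : T -> T, strategyII ltT L sg.
Proof.
  destruct (choice (fun s v => ~ leaf ltT s -> immsucc ltT s v)) as [sg Hsg].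
  - intros s. destruct (classic (leaf ltT s)) as [Hs|Hs].
    + exists s. contradiction.
    + unfold leaf in Hs. apply not_all_not_ex in Hs. destruct Hs as [u Hsu].
      destruct (exists_immsucc Hsu) as [v Hv]. exists v. auto.
  - exists sg. intros s Hs _. exact (Hsg s Hs).
Qed.

Lemma winning_II_agree xi sg sg' :
  strategyII ltT L sg' ->
  (forall t, ~ leaf ltT t -> L t = LUnion K -> sg' t = sg t) ->
  winning_II ltT L xi sg -> winning_II ltT L xi sg'.
Proof.
  intros Hsg' Hagree [_ Hwin]. split; [exact Hsg'|].
  intros P HP Hfollow. apply (Hwin P HP).
  intros t Pt Ht HU. rewrite <- (Hagree t Ht HU). exact (Hfollow t Pt Ht HU).
Qed.

End Trees.

Section StrategyCodes.
Variables (K T : Type) (ltT : T -> T -> Prop) (L : T -> label K).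
Variables (code : T -> K) (decode : K -> T) (default : T -> T).

Definition next_node (s : T) (k : K) : T :=
  if excluded_middle_informative (immsucc ltT s (decode k)) then decode k else default s.

Definition strategy_of (eta : K -> K) (s : T) : T := next_node s (eta (code s)).

Definition code_of_strategy (sg : T -> T) : K -> K := fun k => code (sg (decode k)).

Lemma strategy_of_strategyII eta :
  strategyII ltT L default -> strategyII ltT L (strategy_of eta).
Proof.
  intros Hdefault s Hs HU. unfold strategy_of, next_node.
  destruct (excluded_middle_informative _) as [H|_]; [exact H | exact (Hdefault s Hs HU)].
Qed.

Lemma strategy_of_code sg :
  (forall t, decode (code t) = t) -> strategyII ltT L sg ->
  forall t, ~ leaf ltT t -> L t = LUnion K -> strategy_of (code_of_strategy sg) t = sg t.
Proof.
  intros decode_code Hsg t Ht HU. unfold strategy_of, next_node, code_of_strategy.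
  rewrite !decode_code.
  destruct (excluded_middle_informative _) as [_|Hnot]; [reflexivity|].
  exfalso; exact (Hnot (Hsg t Ht HU)).
Qed.

Hypothesis K_infinite : card_le nat K.
Hypothesis T_le_K : card_le T K.

Lemma kBorel2_reached_by t :
  kBorel2 (fun p : (K -> K) * (K -> K) => reached_by ltT L (strategy_of (snd p)) t).
Proof.
  apply kBorel2_forall; [exact T_le_K|]. intros s.
  exact (kBorel2_snd_coord K_infinite (code s)
    (fun k => ltT s t -> ~ leaf ltT s -> L s = LUnion K -> leT ltT (next_node s k) t)).
Qed.

Lemma kBorel2_wins_at_reached_leaves :
  (forall t, leaf ltT t -> exists A, L t = LOpen A /\ basic_open A) ->
  kBorel2 (fun p => wins_at_reached_leaves ltT L (fst p) (strategy_of (snd p))).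
Proof.
  intros leaves_basic. apply kBorel2_forall; [exact T_le_K|]. intros t.
  destruct (classic (leaf ltT t)) as [Ht|Ht].
  - destruct (leaves_basic t Ht) as [A [HA HAopen]].
    apply (kBorel2_ext (kBorel2_or K_infinite
             (kBorel2_compl (kBorel2_reached_by t)) (kBorel2_fst K_infinite HAopen))).
    intros p. rewrite HA. split.
    + intros [Hnr|Hxi] _ Hr; [contradiction | eauto].
    + intros H. destruct (classic (reached_by ltT L (strategy_of (snd p)) t)) as [Hr|Hnr].
      * destruct (H Ht Hr) as [A' [HA' Hxi]]. injection HA' as <-. right; exact Hxi.
      * left; exact Hnr.
  - apply (kBorel2_ext (kBorel2_True K_infinite)).
    intros p; split; [intros _ Ht'; contradiction | trivial].
Qed.

End StrategyCodes.

Theorem lemma3p4 (K : Type) (ltK : K -> K -> Prop) (Lam : Type)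
  (T : Type) (ltT : T -> T -> Prop) (L : T -> label K) :
  regular_cardinal ltK ->
  card_le Lam K ->
  good_labelled_tree ltK ltT L Lam ->
  borel_star_code ltK ltT L Lam.
Proof.
  intros Hreg HLam Hgood. split; [exact Hgood|].
  destruct Hgood as [Htree [_ [_ [HT [Hsup [_ Hleaves]]]]]].
  destruct Hreg as [_ [_ [_ [_ [_ [Hinf _]]]]]].
  destruct (card_le_trans HT HLam) as [code Hcode].
  pose proof Htree as [_ [_ [[root _] _]]].
  destruct (injective_left_inverse root Hcode) as [decode Hdecode].
  destruct (exists_strategyII L Htree) as [default Hdefault].
  exists (fun _ => True), (strategy_of ltT code decode default).
  assert (Hpi : forall eta, strategyII ltT L (strategy_of ltT code decode default eta))
    by (intros eta; exact (strategy_of_strategyII code decode eta Hdefault)).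
  split; [apply kclosed_full|]. split; [|split].
  - intros eta _. exact (Hpi eta).
  - intros xi [sg Hwin]. exists (code_of_strategy code decode sg). split; [exact I|].
    apply (winning_II_agree (sg := sg)); [exact (Hpi _) | | exact Hwin].
    exact (strategy_of_code code decode default Hdecode (proj1 Hwin)).
  - apply (kBorel2_ext (kBorel2_wins_at_reached_leaves L code decode default Hinf
                         (ex_intro _ code Hcode) Hleaves)).
    intros p. rewrite <- (winning_plays_iff_reached_leaves L Htree Hsup). split.
    + intros Hwin. split; [exact I | split; [exact (Hpi _) | exact Hwin]].
    + intros [_ [_ Hwin]]. exact Hwin.
Qed.
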